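(* Let $n$ be a positive integer and $x=(x_1,\ldots,x_n)\in C^n$. Let $|x|$ denote the number of indices $i$ such that $x_i$ is rational. Then the group of germs $G_{(nV,x)}$ is isomorphic to $\mathbb{Z}^{|x|}$.
   Context: Identify the Cantor set $C$ with $\{0,1\}^{\mathbb N}$, the set of infinite binary strings with the product topology. A point $s\in C$ is rational if it is eventually periodic, i.e. $s=Pww w\cdots$ for some finite binary string $P$ and some nonempty finite binary string $w$. For finite binary strings $P_0,\ldots,P_{n-1}$, the $n$-rectangle $(P_0,\ldots,P_{n-1})$ is $\{(P_0z_0,\ldots,P_{n-1}z_{n-1}): z_i\in C\}\subseteq C^n$ (concatenation of strings). For $n$-rectangles $D=(P_0,\ldots,P_{n-1})$, $R=(Q_0,\ldots,Q_{n-1})$, the $n$-rectangle map $\tau_{(D,R)}:D\to R$ sends $(P_0z_0,\ldots,P_{n-1}z_{n-1})\mapsto(Q_0z_0,\ldots,Q_{n-1}z_{n-1})$. A pattern is a partition of $C^n$ into finitely many $n$-rectangles. The group $nV$ consists of all homeomorphisms $f:C^n\to C^n$ for which there are a domain pattern $\{D_1,\ldots,D_k\}$ and a range pattern $\{R_1,\ldots,R_k\}$ with $f$ equal to the union of the maps $\tau_{(D_i,R_i)}$. For a group $K$ of homeomorphisms of a space $X$ and $x\in X$: $Fix_{(K,x)}=\{h\in K: h(x)=x\}$; $f\sim_x g$ if $f$ and $g$ agree on some neighborhood of $x$; $G_{(K,x)}$ is the set of $\sim_x$-classes $[h]_x$, a group under $[f]_x[g]_x=[fg]_x$. *)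

From HB Require Import structures.
From mathcomp Require Import all_boot all_order all_algebra.
From mathcomp Require Import all_classical all_reals all_analysis.

Set Implicit Arguments.
Unset Strict Implicit.
Unset Printing Implicit Defensive.

Import Order.TTheory GRing.Theory Num.Theory.
Local Open Scope classical_set_scope.

(* The Cantor set C = {0,1}^N with the product topology is [cantor_space]
   (= prod_topology (fun _ : nat => bool)); C^n is the product space
   {ptws 'I_n -> cantor_space}. *)

Definition Cn (n : nat) : Type := {ptws 'I_n -> cantor_space}.

Definition concat (P : seq bool) (z : cantor_space) : cantor_space :=
  fun m => if (m < size P)%N then nth false P m else z (m - size P)%N.

Definition repeat_str (w : seq bool) : cantor_space :=
  fun m => nth false w (m %% size w)%N.

Definition rational_pt (s : cantor_space) : Prop :=
  exists (P w : seq bool), w != [::] /\ s = concat P (repeat_str w).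

Definition rectangle (n : nat) := 'I_n -> seq bool.

Definition rect_set (n : nat) (D : rectangle n) : set (Cn n) :=
  [set y | exists z : 'I_n -> cantor_space, y = (fun i => concat (D i) (z i))].

Definition is_pattern (n k : nat) (Ds : 'I_k -> rectangle n) : Prop :=
  forall y : Cn n, exists! j : 'I_k, rect_set (Ds j) y.

Definition is_homeo (n : nat) (f : Cn n -> Cn n) : Prop :=
  continuous f /\
  exists g : Cn n -> Cn n, [/\ cancel f g, cancel g f & continuous g].

(* the group nV: homeomorphisms that are unions of rectangle maps
   tau_(D_j,R_j) for a domain pattern {D_j} and range pattern {R_j} *)
Definition in_nV (n : nat) (f : Cn n -> Cn n) : Prop :=
  is_homeo f /\
  exists (k : nat) (Ds Rs : 'I_k -> rectangle n),
    [/\ is_pattern Ds, is_pattern Rs &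
        forall (j : 'I_k) (z : 'I_n -> cantor_space),
          f (fun i => concat (Ds j i) (z i)) = (fun i => concat (Rs j i) (z i))].

Definition in_Fix_nV (n : nat) (x : Cn n) (f : Cn n -> Cn n) : Prop :=
  in_nV f /\ f x = x.

Definition germ_eq (n : nat) (x : Cn n) (f g : Cn n -> Cn n) : Prop :=
  \forall y \near x, f y = g y.

Definition num_rational (n : nat) (x : Cn n) : nat :=
  #|[set i : 'I_n | `[< rational_pt (x i) >]]|.

(* "G_(nV,x) is isomorphic to the additive group Z^k": there is a map phi
   from Fix_(nV,x) to Z^k (= 'rV[int]_k) inducing a well-defined injective
   map on germ classes (phi f = phi g <-> f ~_x g), which is a homomorphism
   ([f][g] = [f \o g] |-> phi f + phi g) and surjective. *)
Definition germ_group_iso_Zk (n : nat) (x : Cn n) (k : nat) : Prop :=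
  exists phi : (Cn n -> Cn n) -> 'rV[int]_k,
    [/\ forall f g, in_Fix_nV x f -> in_Fix_nV x g ->
          (phi f = phi g <-> germ_eq x f g),
        forall f g, in_Fix_nV x f -> in_Fix_nV x g ->
          phi (f \o g) = (phi f + phi g)%R &
        forall v : 'rV[int]_k, exists2 f, in_Fix_nV x f & phi f = v].

(* Near x, every f fixing x replaces, in each coordinate i, a prefix of
   length b_i of y_i by the prefix of length a_i of x_i.  The integers
   a_i - b_i determine the germ of f and add under composition; they are
   eventual periods of x_i, hence vanish on irrational coordinates and are
   multiples of the least period p_i on rational ones.  Conversely every such
   vector of shifts is realised by a product of maps between two prefix codes,
   so dividing the rational coordinates by p_i identifies G_(nV,x) with
   Z^|x|. *)

From HB Require Import structures.
From mathcomp Require Import all_boot all_order all_algebra.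
From mathcomp Require Import all_classical all_reals all_analysis.
From mathcomp Require Import zify.

Set Implicit Arguments.
Unset Strict Implicit.
Unset Printing Implicit Defensive.

Import Order.TTheory GRing.Theory Num.Theory.
Local Open Scope classical_set_scope.

Lemma prod_topology_cvg (I : Type) (K : I -> topologicalType)
    (F : set_system (prod_topology K)) (f : prod_topology K) : Filter F ->
  (forall i, (fun g : prod_topology K => g i) @ F --> f i) -> F --> f.
Proof.
move=> FF Fi; apply/(@cvg_sup (prod_topology K)) => // i A /= [B [[C Copen <-] Cf] BA].
by apply: filterS BA _; apply: Fi; exact: open_nbhs_nbhs.
Qed.

Definition cyl n (x : Cn n) (M : nat) : set (Cn n) :=
  [set y | forall (i : 'I_n) (m : nat), (m < M)%N -> y i m = x i m].

Lemma cyl_le n (x : Cn n) M M' : (M <= M')%N -> cyl x M' `<=` cyl x M.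
Proof. by move=> MM' y xy i m mM; apply: xy; exact: leq_trans mM MM'. Qed.

Lemma cyl_nbhs n (x : Cn n) M : nbhs x (cyl x M).
Proof.
have coord_nbhs (i : 'I_n) (m : nat) : \forall y \near x, y i m = x i m.
  have cont_i : continuous (fun y : Cn n => y i) := @proj_continuous _ _ i.
  have cont_m : continuous (fun s : cantor_space => s m) := @proj_continuous _ _ m.
  exact: cont_i _ _ (cont_m (x i) [set x i m] ((principal_filterP _ _).2 erefl)).
have := @filter_forall _ ('I_n * 'I_M)%type
  (fun p (y : Cn n) => y p.1 p.2 = x p.1 p.2) _ (nbhs_filter x)
  (fun p => coord_nbhs p.1 p.2).
by apply: filterS => y xy i m mM; exact: (xy (i, Ordinal mM)).
Qed.

Lemma nbhs_cyl n (x : Cn n) (U : set (Cn n)) : nbhs x U -> exists M, cyl x M `<=` U.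
Proof.
pose G := filter_from [set: nat] (cyl x).
have FG : Filter G.
  apply: filter_fromT_filter; first by exists 0%N.
  by move=> M M'; exists (maxn M M') => y xy; split; apply: cyl_le xy;
    rewrite leq_max leqnn ?orbT.
suff /(_ U) xG : G --> x by move=> /xG [M _ MU]; exists M.
apply: prod_topology_cvg => i; apply: prod_topology_cvg => m A /principal_filterP Axm.
by exists m.+1 => // y xy; rewrite /= xy.
Qed.

Lemma cyl_continuous n (f : Cn n -> Cn n) :
  (forall y M, exists M', cyl y M' `<=` f @^-1` cyl (f y) M) -> continuous f.
Proof.
move=> fcyl y U /nbhs_cyl [M MU]; have [M' M'f] := fcyl y M.
by apply: filterS (cyl_nbhs y M') => y' /M'f /MU.
Qed.

Definition shift (s : cantor_space) (k : nat) : cantor_space := fun m => s (m + k)%N.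

Definition prefixb (P : seq bool) (s : cantor_space) : bool :=
  [forall m : 'I_(size P), nth false P m == s m].

Lemma prefixbP P s :
  reflect (forall m, (m < size P)%N -> nth false P m = s m) (prefixb P s).
Proof.
apply: (iffP forallP) => [Ps m mP|Ps m]; first exact/eqP/(Ps (Ordinal mP)).
exact/eqP/Ps.
Qed.

Lemma prefix_concat P z : prefixb P (concat P z).
Proof. by apply/prefixbP => m mP; rewrite /concat mP. Qed.

Lemma shift_concat P z : shift (concat P z) (size P) = z.
Proof. by apply: funext => m; rewrite /shift /concat ltnNge leq_addl addnK. Qed.

Lemma concat_shift P s : prefixb P s -> concat P (shift s (size P)) = s.
Proof.
move/prefixbP => Ps; apply: funext => m; rewrite /concat /shift.
by case: ltnP => [/Ps //|Pm]; rewrite subnK.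
Qed.

Lemma rect_setP n (D : rectangle n) (y : Cn n) :
  rect_set D y <-> forall i, prefixb (D i) (y i).
Proof.
split=> [[z ->] i|Dy]; first exact: prefix_concat.
by exists (fun i => shift (y i) (size (D i))); apply: funext => i; rewrite concat_shift.
Qed.

Definition eventual_period (s : cantor_space) (t : nat) : Prop :=
  exists K, forall k, (K <= k)%N -> s (k + t)%N = s k.

Lemma eventual_period_from_mul (s : cantor_space) t K :
  (forall k, (K <= k)%N -> s (k + t)%N = s k) ->
  forall q k, (K <= k)%N -> s (k + q * t)%N = s k.
Proof.
move=> sK; elim=> [|q IHq] k Kk; first by rewrite addn0.
by rewrite mulSn addnA IHq ?sK // (leq_trans Kk (leq_addr _ _)).
Qed.

Lemma eventual_period_mull s t q : eventual_period s t -> eventual_period s (q * t).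
Proof. by case=> K sK; exists K; exact: eventual_period_from_mul. Qed.

Lemma eventual_period_mod s p t :
  eventual_period s p -> eventual_period s t -> eventual_period s (t %% p).
Proof.
move=> [K1 sp] [K2 st]; exists (K1 + K2)%N => k Kk.
rewrite -(eventual_period_from_mul sp (t %/ p) (k:=(k + t %% p)%N)); last by lia.
by rewrite -addnA [(_ %% p + _)%N]addnC -divn_eq st //; lia.
Qed.

Lemma rational_ptP s : rational_pt s <-> exists2 t, (0 < t)%N & eventual_period s t.
Proof.
split=> [[P [w [w0 ->]]]|[t t0 [K sK]]].
  exists (size w); first by rewrite lt0n size_eq0.
  exists (size P) => k Pk; rewrite /concat /repeat_str !ltnNge Pk.
  rewrite (leq_trans Pk (leq_addr _ _)) /=.
  by rewrite addnC -addnBA // modnDl.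
exists (mkseq s K), (mkseq (fun m => s (K + m)%N) t); split.
  by rewrite -size_eq0 size_mkseq -lt0n.
apply: funext => m; rewrite /concat /repeat_str !size_mkseq.
case: ltnP => [mK|Km]; first by rewrite nth_mkseq.
rewrite nth_mkseq ?ltn_mod //.
rewrite -[RHS](eventual_period_from_mul sK ((m - K) %/ t)) ?leq_addr //.
by rewrite -addnA [(_ %% t + _)%N]addnC -divn_eq subnKC.
Qed.

Lemma eventual_period_irrational s t : ~ rational_pt s -> eventual_period s t -> t = 0%N.
Proof. by case: t => // t s_irr st; case: s_irr; apply/rational_ptP; exists t.+1. Qed.

(* The least positive eventual period (junk value 1 for irrational points). *)
Definition min_period (s : cantor_space) : nat :=
  if pselect (exists t, (0 < t)%N && `[< eventual_period s t >]) is left st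
  then ex_minn st else 1.

Lemma min_period_gt0 s : (0 < min_period s)%N.
Proof. by rewrite /min_period; case: pselect => // st; case: ex_minnP => p /andP[]. Qed.

Lemma min_periodP s : rational_pt s ->
  eventual_period s (min_period s) /\
  forall t, eventual_period s t -> (min_period s %| t)%N.
Proof.
move=> /rational_ptP [t0 t00 st0]; rewrite /min_period.
case: pselect => [exP|]; last by case; exists t0; rewrite t00; exact/asboolP.
case: ex_minnP => p /andP[p0 /asboolP sp] p_min; split=> // t st.
rewrite /dvdn; case r_def: (t %% p)%N => [//|r].
have sr := eventual_period_mod sp st; rewrite r_def in sr.
have /p_min : (0 < r.+1)%N && `[< eventual_period s r.+1 >] by rewrite asboolT.
by rewrite -r_def leqNgt ltn_mod p0.
Qed.

(* Near x, [f] replaces the first [b i] letters of [y i] by the first [a i]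
   letters of [x i]; the first clause says that this fixes [x]. *)
Definition shift_germ n (x : Cn n) (f : Cn n -> Cn n) (a b : 'I_n -> nat) : Prop :=
  (forall i m, (a i <= m)%N -> x i (m - a i + b i)%N = x i m) /\
  \forall y \near x, forall i m,
     f y i m = if (m < a i)%N then x i m else y i (m - a i + b i)%N.

Section ShiftGerm.
Variables (n : nat) (x : Cn n).

Lemma shift_germ_fix f a b : shift_germ x f a b -> f x = x.
Proof.
move=> [xab /nbhs_singleton fx]; apply: funext => i; apply: funext => m.
by rewrite fx; case: ltnP => // /xab.
Qed.

(* A point agreeing with [x] on a long prefix, except for a single marked
   letter far out in coordinate [i], reveals the shift [a i - b i]. *)
Lemma shift_germ_uniq f g a b a' b' :
  shift_germ x f a b -> shift_germ x g a' b' -> germ_eq x f g ->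
  forall i, (a i + b' i = a' i + b i)%N.
Proof.
move=> [_ fab] [_ gab] fg i.
have [M /(_ _ _) fgM] := nbhs_cyl (filterI fab (filterI gab fg)).
apply/eqP/negPn/negP => ab_neq.
pose m := (a i + a' i + M)%N; pose p := (m - a i + b i)%N.
pose y : Cn n := fun j k => if (j == i) && (M <= k)%N then k == p else x j k.
have xy : cyl x M y by move=> j k kM; rewrite /y leqNgt kM andbF.
have [fy [gy fgy]] := fgM y xy.
have := fy i m; rewrite fgy gy.
have -> : (m < a' i)%N = false by rewrite /m; lia.
have -> : (m < a i)%N = false by rewrite /m; lia.
rewrite /y eqxx /=.
have -> : (M <= m - a' i + b' i)%N by rewrite /m; lia.
have -> : (M <= p)%N by rewrite /p /m; lia.
by rewrite eqxx => /eqP; rewrite /p /m; lia.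
Qed.

Lemma shift_germ_eq f g a b a' b' :
  shift_germ x f a b -> shift_germ x g a' b' ->
  (forall i, a i + b' i = a' i + b i)%N -> germ_eq x f g.
Proof.
move=> [xab fab] [xab' gab] ab_eq.
pose B := (\max_i (a i + b i + a' i + b' i)).+1.
have abB i : (a i + b i + a' i + b' i < B)%N.
  by rewrite ltnS (@leq_bigmax _ (fun i => (a i + b i + a' i + b' i)%N) i).
apply: filterS (filterI (cyl_nbhs x B) (filterI fab gab)) => y [xy [fy gy]].
apply: funext => i; apply: funext => m; rewrite fy gy.
have := abB i; have := ab_eq i.
case: (ltnP m (a i)) => mai; case: (ltnP m (a' i)) => mai' // ab_i abB_i.
- by rewrite xy ?xab' //; lia.
- by rewrite xy ?xab //; lia.
- by congr (y i); lia.
Qed.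

Lemma shift_germ_comp f g a b a' b' :
  shift_germ x f a b -> shift_germ x g a' b' ->
  shift_germ x (f \o g) (fun i => a i + a' i)%N (fun i => b i + b' i)%N.
Proof.
move=> [xab fab] [xab' gab].
have [Mf fMf] := nbhs_cyl fab; have [Mg gMg] := nbhs_cyl gab.
split=> [i m aa'm|].
  have -> : (m - (a i + a' i) + (b i + b' i) = m - a i + b i - a' i + b' i)%N by lia.
  by rewrite xab' ?xab //; lia.
pose B := (Mf + Mg + \max_i (a i + b i + a' i + b' i)).+1.
have abB i : (Mf + Mg + (a i + b i + a' i + b' i) < B)%N.
  by rewrite ltnS leq_add2l (@leq_bigmax _ (fun i => (a i + b i + a' i + b' i)%N) i).
apply: filterS (cyl_nbhs x B) => y xy i m.
have xgy : cyl x Mf (g y).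
  move=> j k kMf; rewrite gMg; last by apply: cyl_le xy; have := abB j; lia.
  case: ltnP => // a'k; have := abB j => abB_j.
  by rewrite xy ?xab' //; lia.
rewrite /= fMf // gMg; last by apply: cyl_le xy; have := abB i; lia.
case: (ltnP m (a i)) => mai; first by rewrite (_ : m < a i + a' i)%N //; lia.
case: (ltnP m (a i + a' i)) => maa'.
  case: ltnP => [_|a'm]; first exact: xab.
  by have := abB i => abB_i; rewrite xy ?xab' ?xab //; lia.
rewrite ifN -?leqNgt; last by lia.
by congr (y i); lia.
Qed.

Lemma shift_germ_period f a b i :
  shift_germ x f a b -> eventual_period (x i) (absz ((a i)%:Z - (b i)%:Z)%R).
Proof.
move=> [xab _]; case: (leqP (b i) (a i)) => [ba|/ltnW ab].
  by rewrite distnEl //; exists (b i) => k bk; rewrite -[LHS]xab; [congr (x i)|]; lia.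
by rewrite distnEr //; exists (a i) => k ak; rewrite -[RHS]xab; [congr (x i)|]; lia.
Qed.

Lemma shift_germ_rect f (D R : rectangle n) :
  (forall i, prefixb (D i) (x i)) ->
  (forall z, f (fun i => concat (D i) (z i)) = fun i => concat (R i) (z i)) ->
  f x = x -> shift_germ x f (fun i => size (R i)) (fun i => size (D i)).
Proof.
move=> Dx fDR fx.
have fD (y : Cn n) : (forall i, prefixb (D i) (y i)) ->
    f y = fun i => concat (R i) (shift (y i) (size (D i))).
  by move=> Dy; rewrite -fDR; congr f; apply: funext => i; rewrite concat_shift.
have xRD i m : x i m = concat (R i) (shift (x i) (size (D i))) m.
  by rewrite -{1}fx fD.
split=> [i m Rm|]; first by rewrite [RHS]xRD /concat ltnNge Rm.
pose B := (\max_i size (D i)).+1.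
apply: filterS (cyl_nbhs x B) => y xy i m.
have Dy j : prefixb (D j) (y j).
  apply/prefixbP => k kD; rewrite xy; first exact/prefixbP.
  by rewrite ltnS (leq_trans (ltnW kD)) // (@leq_bigmax _ (fun j => size (D j))).
by rewrite fD // [in RHS]xRD /concat; case: ifP.
Qed.

Lemma Fix_shift_germ f : in_Fix_nV x f -> exists a b, shift_germ x f a b.
Proof.
move=> [[_ [k [Ds [Rs [Dpat _ fDR]]]]] fx].
have [j [/rect_setP Dx _]] := Dpat x.
by do 2 eexists; exact: shift_germ_rect Dx (fDR j) fx.
Qed.

End ShiftGerm.

Definition prefix_code (T : finType) (w : T -> seq bool) : Prop :=
  forall s : cantor_space, exists! t, prefixb (w t) s.

(* The map [dom t ++ z |-> ran t ++ z]; for two prefix codes indexed by the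
   same type it is a homeomorphism of C (the identity branch is never used). *)
Definition code_map (T : finType) (dom ran : T -> seq bool) (s : cantor_space) :
    cantor_space :=
  if [pick t | prefixb (dom t) s] is Some t then concat (ran t) (shift s (size (dom t)))
  else s.

Section CodeMap.
Variables (T : finType) (dom ran : T -> seq bool).
Hypothesis dom_code : prefix_code dom.

Lemma code_mapE s t :
  prefixb (dom t) s -> code_map dom ran s = concat (ran t) (shift s (size (dom t))).
Proof.
move=> dts; rewrite /code_map; case: pickP => [t' dt's|/(_ t)]; last by rewrite dts.
by have [t0 [_ t0_uniq]] := dom_code s; rewrite -(t0_uniq _ dts) (t0_uniq _ dt's).
Qed.

Lemma code_map_concat t z : code_map dom ran (concat (dom t) z) = concat (ran t) z.
Proof. by rewrite (code_mapE (prefix_concat _ _)) shift_concat. Qed.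

End CodeMap.

Lemma code_mapK (T : finType) (dom ran : T -> seq bool) :
  prefix_code dom -> prefix_code ran -> cancel (code_map dom ran) (code_map ran dom).
Proof.
move=> dom_code ran_code s; have [t [dts _]] := dom_code s.
by rewrite (code_mapE _ dom_code dts) code_map_concat ?concat_shift.
Qed.

Definition prod_code_map n (T : 'I_n -> finType) (dom ran : forall i, T i -> seq bool)
  (y : Cn n) : Cn n := fun i => code_map (dom i) (ran i) (y i).

Section ProdCodeMap.
Variables (n : nat) (T : 'I_n -> finType).
Implicit Types dom ran : forall i, T i -> seq bool.

Lemma prod_code_pattern (D : forall i, T i -> seq bool) :
  (forall i, prefix_code (D i)) ->
  is_pattern (fun (j : 'I_#|{: {dffun forall i, T i}}|) i => D i (enum_val j i)).
Proof.
move=> D_code y.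
have /all_sig [t Dty] : forall i, {t | prefixb (D i t) (y i)}.
  by move=> i; apply: cid; have [t [Dty _]] := D_code i (y i); exists t.
exists (enum_rank ([ffun i => t i] : {dffun forall i, T i})); split.
  by apply/rect_setP => i /=; rewrite enum_rankK ffunE.
move=> j /rect_setP Djy; apply: enum_val_inj; rewrite enum_rankK; apply/ffunP => i.
have [t0 [_ t0_uniq]] := D_code i (y i).
by rewrite ffunE -(t0_uniq _ (Djy i)) (t0_uniq _ (Dty i)).
Qed.

Lemma prod_code_map_continuous dom ran :
  (forall i, prefix_code (dom i)) -> continuous (prod_code_map dom ran).
Proof.
move=> dom_code; apply: cyl_continuous => y M.
pose B := (\max_(i < n) \max_(t : T i) size (dom i t))%N.
have domB i t : (size (dom i t) <= B)%N.
  apply: leq_trans (@leq_bigmax _ (fun i => \max_(t : T i) size (dom i t))%N i).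
  exact: (@leq_bigmax _ (fun t => size (dom i t)) t).
exists (M + B)%N => y' yy' i m mM.
have [t [dty _]] := dom_code i (y i); have := domB i t => dtB.
have dty' : prefixb (dom i t) (y' i).
  by apply/prefixbP => k kd; rewrite yy'; [exact/prefixbP|lia].
rewrite /prod_code_map (code_mapE _ (dom_code i) dty) (code_mapE _ (dom_code i) dty').
by rewrite /concat /shift; case: ifP => // _; rewrite yy' //; lia.
Qed.

Lemma prod_code_map_nV dom ran : (forall i, prefix_code (dom i)) ->
  (forall i, prefix_code (ran i)) -> in_nV (prod_code_map dom ran).
Proof.
move=> dom_code ran_code; split.
  split; first exact: prod_code_map_continuous.
  exists (prod_code_map ran dom); split; last exact: prod_code_map_continuous.
  - by move=> y; apply: funext => i; rewrite /prod_code_map code_mapK.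
  - by move=> y; apply: funext => i; rewrite /prod_code_map code_mapK.
exists #|{: {dffun forall i, T i}}|.
exists (fun (j : 'I_#|{: {dffun forall i, T i}}|) i => dom i (enum_val j i)).
exists (fun (j : 'I_#|{: {dffun forall i, T i}}|) i => ran i (enum_val j i)).
split; [exact: prod_code_pattern | exact: prod_code_pattern |].
by move=> j z; apply: funext => i; rewrite /prod_code_map code_map_concat.
Qed.

Lemma prod_code_map_shift_germ (x : Cn n) dom ran (t : forall i, T i) :
  (forall i, prefix_code (dom i)) ->
  (forall i, prefixb (dom i (t i)) (x i)) ->
  (forall i, concat (ran i (t i)) (shift (x i) (size (dom i (t i)))) = x i) ->
  shift_germ x (prod_code_map dom ran)
    (fun i => size (ran i (t i))) (fun i => size (dom i (t i))).
Proof.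
move=> dom_code dtx x_fix; apply: shift_germ_rect => // [z|].
  by apply: funext => i; rewrite /prod_code_map code_map_concat.
by apply: funext => i; rewrite /prod_code_map (code_mapE _ (dom_code i) (dtx i)).
Qed.

End ProdCodeMap.

Lemma nth_branch (g : nat -> bool) j c (u : seq bool) m :
  nth false (rcons (mkseq g j) c ++ u) m =
  if (m < j)%N then g m else if m == j then c else nth false u (m - j.+1).
Proof.
rewrite nth_cat size_rcons size_mkseq nth_rcons size_mkseq.
case: (ltngtP m j) => mj; last by rewrite mj ltnSn.
  by rewrite ltnS ltnW // nth_mkseq.
by rewrite ltnNge mj.
Qed.

Lemma prefix_branchP (g : nat -> bool) j c (u : seq bool) s :
  prefixb (rcons (mkseq g j) c ++ u) s <->
  [/\ forall m, (m < j)%N -> s m = g m, s j = c &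
      forall m, (m < size u)%N -> s (j.+1 + m)%N = nth false u m].
Proof.
split=> [/prefixbP|[sg sc su]].
  rewrite size_cat size_rcons size_mkseq => us; split=> [m mj|| m mu].
  - by rewrite -us ?nth_branch ?mj //; lia.
  - by rewrite -us ?nth_branch ?ltnn ?eqxx //; lia.
  - rewrite -us ?nth_branch; last by lia.
    by rewrite ifN ?ifN -?leqNgt ?addKn //; lia.
apply/prefixbP; rewrite size_cat size_rcons size_mkseq => m mS.
rewrite nth_branch; case: (ltngtP m j) => [mj|jm|->] //; first by rewrite sg.
by rewrite -(subnKC jm) su ?addKn //; lia.
Qed.

Lemma prefix_branch0P (g : nat -> bool) j c s :
  prefixb (rcons (mkseq g j) c) s <-> (forall m, (m < j)%N -> s m = g m) /\ s j = c.
Proof. by rewrite -[rcons _ _]cats0 prefix_branchP; split=> [[]|[]]. Qed.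

Definition branch_word (s : cantor_space) N M (c : bool)
    (t : 'I_N + option (M.-tuple bool)) : seq bool :=
  match t with
  | inl j => rcons (mkseq s j) (~~ s j)
  | inr None => rcons (mkseq s N) c
  | inr (Some u) => rcons (mkseq s N) (~~ c) ++ u
  end.
Arguments branch_word : clear implicits, simpl never.

Lemma branch_word_uniq s N M c s' t1 t2 :
  prefixb (branch_word s N M c t1) s' -> prefixb (branch_word s N M c t2) s' -> t1 = t2.
Proof.
have neqN (b b' : bool) : b = ~~ b' -> b = b' -> False by case: b; case: b'.
case: t1 => [j1|[u1|]]; case: t2 => [j2|[u2|]];
  rewrite /branch_word ?prefix_branch0P ?prefix_branchP.
- move=> [s1 c1] [s2 c2]; congr inl; apply: val_inj => /=.
  case: (ltngtP j1 j2) => // jj; exfalso.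
    by apply: (neqN _ _ c1); apply: s2.
  by apply: (neqN _ _ c2); apply: s1.
- by move=> [_ c1] [s2 _ _]; exfalso; apply: (neqN _ _ c1); apply: s2.
- by move=> [_ c1] [s2 _]; exfalso; apply: (neqN _ _ c1); apply: s2.
- by move=> [s1 _ _] [_ c2]; exfalso; apply: (neqN _ _ c2); apply: s1.
- move=> [_ _ u1s] [_ _ u2s]; congr (inr (Some _)); apply: val_inj => /=.
  apply: (@eq_from_nth _ false); first by rewrite !size_tuple.
  by move=> m; rewrite size_tuple => mM; rewrite -u1s ?size_tuple // u2s ?size_tuple.
- by move=> [_ c1 _] [_ c2]; exfalso; apply: (neqN _ _ c1).
- by move=> [s1 _] [_ c2]; exfalso; apply: (neqN _ _ c2); apply: s1.
- by move=> [_ c1] [_ c2 _]; exfalso; apply: (neqN _ _ c2).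
- by [].
Qed.

Definition window (s : cantor_space) N M : M.-tuple bool :=
  @Tuple M bool (mkseq (fun m => s (N.+1 + m)%N) M) (introT eqP (size_mkseq _ _)).

Lemma nth_window s N M m : (m < M)%N -> nth false (window s N M) m = s (N.+1 + m)%N.
Proof. exact: nth_mkseq. Qed.

Lemma branch_word_code s N M c : prefix_code (branch_word s N M c).
Proof.
move=> s'; suff [t ts'] : exists t, prefixb (branch_word s N M c t) s'.
  by exists t; split=> // t'; apply: branch_word_uniq.
have [leaves|agree] := pselect (exists j, (j < N)%N && (s' j != s j)).
  have [j0 /andP[j0N sj0] j0_min] := ex_minnP leaves.
  exists (inl (Ordinal j0N)); rewrite /branch_word prefix_branch0P; split.
    move=> m mj0; apply/eqP; have := j0_min m.
    by rewrite (ltn_trans mj0 j0N) leqNgt mj0; case: eqP => // _ /(_ isT).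
  by move: sj0; case: (s' j0); case: (s j0).
have {}agree m : (m < N)%N -> s' m = s m.
  by move=> mN; apply/eqP; apply: contra_notT agree => sm; exists m; rewrite mN.
have [s'c|s'c] := eqVneq (s' N) c.
  by exists (inr None); rewrite /branch_word prefix_branch0P.
exists (inr (Some (window s' N M))); rewrite /branch_word prefix_branchP.
split=> // [|m]; first by move: s'c; case: (s' N); case: c.
by rewrite size_tuple => mM; rewrite nth_window.
Qed.

Lemma prefix_code_bij (T : finType) (w : T -> seq bool) (sigma : T -> T) :
  prefix_code w -> bijective sigma -> prefix_code (w \o sigma).
Proof.
move=> w_code [sigma' sigmaK sigma'K] s; have [t [wts t_uniq]] := w_code s.
exists (sigma' t); split=> [|t' wt's]; first by rewrite /= sigma'K.
by rewrite (t_uniq _ wt's) sigmaK.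
Qed.

Definition swap_window N M (w : M.-tuple bool) (t : 'I_N + option (M.-tuple bool)) :
    'I_N + option (M.-tuple bool) :=
  match t with
  | inl j => inl j
  | inr None => inr (Some w)
  | inr (Some u) => if u == w then inr None else inr (Some u)
  end.

Lemma swap_windowK N M w : involutive (@swap_window N M w).
Proof.
case=> [j|[u|]] //=; last by rewrite eqxx.
by case: eqP => [->|uw] //=; case: eqP.
Qed.

(* [branch_word s N M (~~ s N)] relabelled so that its word
   [s_0 .. s_N (window s N M)] sits at [inr None], the index of the word
   [s_0 .. s_N] of [branch_word s N M (s N)]: exchanging the two codes inserts
   or deletes [M] letters after position [N], which fixes [s] when [M] is an
   eventual period of [s] from [N] on. *)
Definition stretch_word (s : cantor_space) N M :=
  branch_word s N M (~~ s N) \o swap_window (window s N M).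
Arguments stretch_word : clear implicits.

Lemma stretch_word_code s N M : prefix_code (stretch_word s N M).
Proof.
apply: prefix_code_bij (branch_word_code _ _ _ _) _.
exact: inv_bij (@swap_windowK _ _ _).
Qed.

Lemma stretch_word_None s N M :
  stretch_word s N M (inr None) = rcons (mkseq s N) (s N) ++ window s N M.
Proof. by rewrite /stretch_word /= /branch_word negbK. Qed.

Lemma size_branch_word_None s N M c : size (branch_word s N M c (inr None)) = N.+1.
Proof. by rewrite size_rcons size_mkseq. Qed.

Lemma size_stretch_word_None s N M : size (stretch_word s N M (inr None)) = (N.+1 + M)%N.
Proof. by rewrite stretch_word_None size_cat size_rcons size_mkseq size_tuple. Qed.

Lemma prefix_branch_word_None s N M : prefixb (branch_word s N M (s N) (inr None)) s.
Proof. exact/prefix_branch0P. Qed.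

Lemma prefix_stretch_word_None s N M : prefixb (stretch_word s N M (inr None)) s.
Proof.
rewrite stretch_word_None; apply/prefix_branchP; split=> // m.
by rewrite size_tuple => mM; rewrite nth_window.
Qed.

Section Stretch.
Variables (s : cantor_space) (N M : nat).
Hypothesis s_period : forall k, (N <= k)%N -> s (k + M)%N = s k.

Lemma stretch_fix :
  concat (stretch_word s N M (inr None)) (shift s N.+1) = s.
Proof.
apply: funext => m; rewrite /concat size_stretch_word_None /shift; case: ltnP => mNM.
  by apply/prefixbP; rewrite ?size_stretch_word_None //; exact: prefix_stretch_word_None.
by rewrite -[LHS]s_period; [congr s|]; lia.
Qed.

Lemma shrink_fix :
  concat (branch_word s N M (s N) (inr None)) (shift s (N.+1 + M)) = s.
Proof.
apply: funext => m; rewrite /concat size_branch_word_None /shift; case: ltnP => mN.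
  by apply/prefixbP; rewrite ?size_branch_word_None //; exact: prefix_branch_word_None.
by rewrite -[RHS]s_period; [congr s|]; lia.
Qed.

End Stretch.

Local Open Scope ring_scope.

Definition shift_diff n (x : Cn n) (f : Cn n -> Cn n) : 'I_n -> int :=
  if pselect (exists ab : ('I_n -> nat) * ('I_n -> nat), shift_germ x f ab.1 ab.2)
  is left abf then let: (a, b) := proj1_sig (cid abf) in fun i => (a i)%:Z - (b i)%:Z
  else fun=> 0.

Section ShiftDiff.
Variables (n : nat) (x : Cn n).

Lemma shift_diffE f a b i :
  shift_germ x f a b -> shift_diff x f i = (a i)%:Z - (b i)%:Z.
Proof.
move=> fab; rewrite /shift_diff; case: pselect => [abf|[]]; last by exists (a, b).
case: (cid abf) => [[a' b'] /= fab'].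
by have := shift_germ_uniq fab' fab (nearW (nbhs_filter x) (fun y => erefl (f y))) i; lia.
Qed.

Lemma germ_eq_shift_diffP f g : in_Fix_nV x f -> in_Fix_nV x g ->
  germ_eq x f g <-> shift_diff x f = shift_diff x g.
Proof.
move=> /Fix_shift_germ [a [b fab]] /Fix_shift_germ [a' [b' gab]].
split=> [fg|fg_diff].
  apply: funext => i; have := shift_germ_uniq fab gab fg i.
  by rewrite (shift_diffE _ fab) (shift_diffE _ gab); lia.
apply: (shift_germ_eq fab gab) => i; have := congr1 (fun d => d i) fg_diff.
by rewrite /= (shift_diffE _ fab) (shift_diffE _ gab); lia.
Qed.

Lemma shift_diff_comp f g i : in_Fix_nV x f -> in_Fix_nV x g ->
  shift_diff x (f \o g) i = shift_diff x f i + shift_diff x g i.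
Proof.
move=> /Fix_shift_germ [a [b fab]] /Fix_shift_germ [a' [b' gab]].
rewrite (shift_diffE _ (shift_germ_comp fab gab)) (shift_diffE _ fab) (shift_diffE _ gab).
lia.
Qed.

Lemma shift_diff_period f i :
  in_Fix_nV x f -> eventual_period (x i) `|shift_diff x f i|.
Proof.
move=> /Fix_shift_germ [a [b fab]].
by rewrite (shift_diffE _ fab); exact: (shift_germ_period i fab).
Qed.

End ShiftDiff.

Lemma exists_shift_code_pair (s : cantor_space) N (d : int) :
  (forall k, (N <= k)%N -> s (k + `|d|)%N = s k) ->
  exists w : ('I_N + option (`|d|.-tuple bool) -> seq bool) *
             ('I_N + option (`|d|.-tuple bool) -> seq bool),
    [/\ prefix_code w.1, prefix_code w.2, prefixb (w.1 (inr None)) s,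
        concat (w.2 (inr None)) (shift s (size (w.1 (inr None)))) = s &
        (size (w.2 (inr None)))%:Z - (size (w.1 (inr None)))%:Z = d].
Proof.
move=> s_period; have [d_ge0|d_lt0] := leP 0 d.
  exists (branch_word s N `|d| (s N), stretch_word s N `|d|); split=> /=.
  - exact: branch_word_code.
  - exact: stretch_word_code.
  - exact: prefix_branch_word_None.
  - by rewrite size_branch_word_None; exact: stretch_fix.
  - by rewrite size_stretch_word_None size_branch_word_None PoszD gez0_abs //; lia.
exists (stretch_word s N `|d|, branch_word s N `|d| (s N)); split=> /=.
- exact: stretch_word_code.
- exact: branch_word_code.
- exact: prefix_stretch_word_None.
- by rewrite size_stretch_word_None; exact: shrink_fix.
- by rewrite size_stretch_word_None size_branch_word_None PoszD ltz0_abs //; lia.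
Qed.

Lemma shift_diff_surj n (x : Cn n) (d : 'I_n -> int) :
  (forall i, eventual_period (x i) `|d i|%N) ->
  exists2 f, in_Fix_nV x f & shift_diff x f = d.
Proof.
move=> d_period.
have /all_sig [N xN] : forall i, {N | forall k, (N <= k)%N -> x i (k + `|d i|)%N = x i k}.
  by move=> i; apply: cid; exact: d_period.
have /all_sig [w /all_and5 [dom_code ran_code dom_x x_fix w_diff]] :=
  fun i => cid (exists_shift_code_pair (xN i)).
have f_germ := prod_code_map_shift_germ (ran := fun i => (w i).2) dom_code dom_x x_fix.
exists (prod_code_map (fun i => (w i).1) (fun i => (w i).2)).
  by split; [exact: prod_code_map_nV|exact: shift_germ_fix f_germ].
by apply: funext => i; rewrite (shift_diffE _ f_germ) w_diff.
Qed.

Definition rational_coords n (x : Cn n) : set 'I_n := [set i | `[< rational_pt (x i) >]].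

(* For a rational coordinate the shift is a multiple of the least period;
   dividing by it gives the coordinate of the germ in Z^|x|. *)
Definition germ_coord n (x : Cn n) (f : Cn n -> Cn n) : 'rV[int]_(num_rational x) :=
  \row_(j < #|rational_coords x|)
    (shift_diff x f (enum_val j) %/ (min_period (x (enum_val j)))%:Z)%Z.

Section GermCoord.
Variables (n : nat) (x : Cn n).

Lemma rational_coordsP i : reflect (rational_pt (x i)) (i \in rational_coords x).
Proof. by apply: (iffP idP) => [/set_mem/asboolP|/asboolP/mem_set]. Qed.

Lemma min_period_neq0 i : (min_period (x i))%:Z != 0.
Proof. by rewrite eqz_nat -lt0n min_period_gt0. Qed.

Lemma shift_diff_dvd f i : in_Fix_nV x f -> i \in rational_coords x ->
  ((min_period (x i))%:Z %| shift_diff x f i)%Z.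
Proof.
move=> /shift_diff_period f_period /rational_coordsP /min_periodP [_ min_dvd].
by rewrite dvdzE absz_nat; exact/min_dvd/f_period.
Qed.

Lemma shift_diff_irrational f i : in_Fix_nV x f -> i \notin rational_coords x ->
  shift_diff x f i = 0.
Proof.
move=> /shift_diff_period f_period /rational_coordsP x_irr.
by apply/eqP; rewrite -absz_eq0; apply/eqP/(eventual_period_irrational x_irr).
Qed.

Lemma germ_coord_eqP f g : in_Fix_nV x f -> in_Fix_nV x g ->
  germ_coord x f = germ_coord x g <-> germ_eq x f g.
Proof.
move=> fFix gFix; rewrite germ_eq_shift_diffP //.
split=> [fg|fg]; last by rewrite /germ_coord fg.
apply: funext => i; have [x_rat|x_irr] := boolP (i \in rational_coords x).
  have := congr1 (fun v : 'rV_ _ => v 0 (enum_rank_in x_rat i)) fg.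
  rewrite !mxE enum_rankK_in // => fg_i.
  rewrite -(divzK (shift_diff_dvd fFix x_rat)) -(divzK (shift_diff_dvd gFix x_rat)).
  by rewrite fg_i.
by rewrite !shift_diff_irrational.
Qed.

Lemma germ_coord_comp f g : in_Fix_nV x f -> in_Fix_nV x g ->
  germ_coord x (f \o g) = germ_coord x f + germ_coord x g.
Proof.
move=> fFix gFix; apply/matrixP => i j; rewrite !mxE shift_diff_comp //.
by rewrite divzDl // shift_diff_dvd // enum_valP.
Qed.

Lemma germ_coord_surj v : exists2 f, in_Fix_nV x f & germ_coord x f = v.
Proof.
pose d i := if [pick j | enum_val j == i] is Some j then v 0 j * (min_period (x i))%:Z
            else 0.
have [|f fFix fd] := @shift_diff_surj _ x d.
  move=> i; rewrite /d; case: pickP => [j /eqP <-|_].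
    rewrite abszM absz_nat; apply: eventual_period_mull.
    by have /rational_coordsP/min_periodP[] := enum_valP j.
  by exists 0%N => k; rewrite addn0.
exists f => //; apply/matrixP => i j; rewrite [i]ord1 !mxE fd /d.
case: pickP => [j' /eqP/enum_val_inj ->|/(_ j)]; last by rewrite eqxx.
by rewrite mulzK ?min_period_neq0.
Qed.

End GermCoord.

Theorem mainTheorem3 (n : nat) (x : Cn n) :
  (0 < n)%N -> germ_group_iso_Zk x (num_rational x).
Proof.
move=> _; exists (germ_coord x); split.
- exact: germ_coord_eqP.
- exact: germ_coord_comp.
- exact: germ_coord_surj.
Qed.
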